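(* Let $\Omega=(\omega_1,\dots,\omega_N)\in\mathbb{R}^N\setminus\{0\}$ and $\|\Omega\|_\infty=\max_i|\omega_i|$. Let $u_*\in[\|\Omega\|_\infty,\frac2{\sqrt3}\|\Omega\|_\infty]$ be the solution of \[ N+2\sum_{j=1}^N\sqrt{1-\frac{\omega_j^2}{u_*^2}}=\sum_{j=1}^N\frac{1}{\sqrt{1-\frac{\omega_j^2}{u_*^2}}}, \] and set $\kappa_c(\Omega)=\dfrac{Nu_*}{N+\sum_{j=1}^N\sqrt{1-\omega_j^2/u_*^2}}$. Then for $\kappa>0$, the system $\dot\theta_i=\omega_i-\frac{\kappa}{N}\sum_{j=1}^N(1+\cos\theta_j)\sin\theta_i$ admits an equilibrium if and only if $\kappa\ge\kappa_c(\Omega)$; in particular $\kappa_c(\Omega)=\inf\{\kappa_*>0:\text{for all }\kappa>\kappa_*\text{ the system admits an equilibrium}\}$. Moreover \[ \frac{2N\|\Omega\|_\infty}{4N-1}\le\frac{16N\|\Omega\|_\infty}{(6N-3+\sqrt{4N^2-4N+9})\sqrt{5-2N+\sqrt{4N^2-4N+9}}\sqrt{3+2N-\sqrt{4N^2-4N+9}}}\le\kappa_c(\Omega)\le\frac{4}{3\sqrt3}\|\Omega\|_\infty, \] with equality in the second inequality when $\omega_i=0$ for all but at most one $i$, and equality in the third when $|\omega_i|=\|\Omega\|_\infty$ for all $i$.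
   Context: An equilibrium is $\Theta\in\mathbb{R}^N$ at which all right-hand sides vanish. *)

From HB Require Import structures.
From mathcomp Require Import all_boot all_order all_algebra.
From mathcomp Require Import all_classical all_reals all_analysis.
Set Implicit Arguments. Unset Strict Implicit. Unset Printing Implicit Defensive.
Import Order.TTheory GRing.Theory Num.Theory.
Local Open Scope ring_scope.

Definition normInf (R : realType) (N : nat) (Om : 'I_N -> R) : R :=
  \big[Num.max/0]_(i < N) `|Om i|.

Definition sqf (R : realType) (u w : R) : R := Num.sqrt (1 - w ^+ 2 / u ^+ 2).

Definition ustar_eq (R : realType) (N : nat) (Om : 'I_N -> R) (u : R) : Prop :=
  N%:R + 2 * \sum_(j < N) sqf u (Om j) = \sum_(j < N) 1 / sqf u (Om j).

Definition kappa_c (R : realType) (N : nat) (Om : 'I_N -> R) (u : R) : R :=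
  N%:R * u / (N%:R + \sum_(j < N) sqf u (Om j)).

Definition rhs (R : realType) (N : nat) (Om : 'I_N -> R) (k : R)
  (th : 'I_N -> R) (i : 'I_N) : R :=
  Om i - k / N%:R * \sum_(j < N) (1 + cos (th j)) * sin (th i).

Definition has_equilibrium (R : realType) (N : nat) (Om : 'I_N -> R) (k : R) : Prop :=
  exists th : 'I_N -> R, forall i, rhs Om k th i = 0.

Definition lower_bound (R : realType) (N : nat) (M : R) : R :=
  let s := Num.sqrt (4 * N%:R ^+ 2 - 4 * N%:R + 9) in
  16 * N%:R * M /
  ((6 * N%:R - 3 + s) * Num.sqrt (5 - 2 * N%:R + s) * Num.sqrt (3 + 2 * N%:R - s)).

From HB Require Import structures.
From mathcomp Require Import all_boot all_order all_algebra.
From mathcomp Require Import all_classical all_reals all_analysis.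
From mathcomp Require Import ring lra.
Import Order.TTheory GRing.Theory Num.Theory.
Import numFieldNormedType.Exports.
Set Implicit Arguments. Unset Strict Implicit. Unset Printing Implicit Defensive.
Local Open Scope ring_scope.
Local Open Scope classical_set_scope.

(* Writing r := (k/N) sum_j (1 + cos th_j), the equilibria are exactly the th
   with sin th_i = om_i / r for all i and k sum_j (1 + cos th_j) = N r.  Taking
   every cos th_j >= 0 is best, so an equilibrium exists iff k G(r) >= N r for
   some r >= ||Om||, where G(r) = N + sum_j sqrt (1 - om_j^2/r^2), and then, by
   the intermediate value theorem, iff k G(r) = N r for some such r.  In the
   variable t = 1/r the map t G(1/t) is concave, and the equation defining u
   says that its derivative vanishes at t = 1/u; so u maximises G(r)/r and
   the threshold is N u / G(u) = kappa_c.
   For the lower bound, G(u) <= 2N - 1 + sqrt (1 - x^2) with x = ||Om|| / u,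
   and x (2N - 1 + sqrt (1 - x^2)) is maximised at an explicit point of the unit
   circle; for the upper bound, compare G(u)/u with G(r)/r at
   r = 2 ||Om|| / sqrt 3, where every square root is at least 1/2. *)

(* Tangent-line inequality at [t0] for the concave map [t |-> t * sqrt (1 - a t^2)],
   multiplied through by [c0 = sqrt (1 - a t0^2)]. *)
Lemma mul_sqrt_tangent_le (R : realFieldType) (a t t0 c c0 : R) :
  0 <= a -> 0 <= t -> 0 <= t0 -> 0 <= c -> 0 <= c0 ->
  c ^+ 2 = 1 - a * t ^+ 2 -> c0 ^+ 2 = 1 - a * t0 ^+ 2 ->
  t * c * c0 <= t * (1 - 2 * a * t0 ^+ 2) + a * t0 ^+ 3.
Proof.
move=> a_ge0 t_ge0 t0_ge0 c_ge0 c0_ge0 c2 c02.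
have : 0 <= t * (c - c0) ^+ 2 by rewrite mulr_ge0 // sqr_ge0.
have : 0 <= a * ((t - t0) ^+ 2 * (t + 2 * t0)).
  by rewrite mulr_ge0 // mulr_ge0 ?sqr_ge0 // addr_ge0 // mulr_ge0.
nra.
Qed.

Lemma inf_threshold (R : realType) (P : R -> Prop) (c : R) :
  0 < c -> (forall k, 0 < k -> P k <-> c <= k) ->
  c = inf [set ks | 0 < ks /\ forall k, ks < k -> P k].
Proof.
move=> c_gt0 hP; set E := [set ks | _].
have memE ks : E ks <-> c <= ks.
  split=> [[ks_gt0 hks]|c_le_ks].
  - rewrite leNgt; apply/negP => ks_lt_c.
    have ks_lt : ks < (ks + c) / 2 by lra.
    have := (hP _ (lt_trans ks_gt0 ks_lt)).1 (hks _ ks_lt); lra.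
  - split=> [|k ks_lt_k]; first exact: lt_le_trans c_le_ks.
    apply/hP; last exact: le_trans c_le_ks (ltW ks_lt_k).
    exact: lt_le_trans c_gt0 (le_trans c_le_ks (ltW ks_lt_k)).
have c_lb : lbound E c by move=> y /memE.
apply/le_anti/andP; split; first by apply: lb_le_inf => //; exists c; apply/memE.
exact: (ge_inf (ex_intro _ c c_lb)) (proj2 (memE c) (lexx c)).
Qed.

Section Sqf.
Variable R : realType.
Implicit Types r u w x : R.

Lemma sqf_ge0 r w : 0 <= sqf r w.
Proof. exact: sqrtr_ge0. Qed.

Lemma sqf_le1 r w : sqf r w <= 1.
Proof.
rewrite /sqf -[leRHS]sqrtr1 ler_sqrt // gerBl.
by rewrite divr_ge0 ?sqr_ge0.
Qed.

Lemma sqf_sqr r w : 0 < r -> `|w| <= r -> sqf r w ^+ 2 = 1 - w ^+ 2 / r ^+ 2.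
Proof.
move=> r_gt0 w_le_r; rewrite sqr_sqrtr // subr_ge0 ler_pdivrMr ?exprn_gt0 // mul1r.
by rewrite -(real_normK (num_real w)) lerXn2r // nnegrE // ltW.
Qed.

Lemma sqf_gt0 r w : `|w| < r -> 0 < sqf r w.
Proof.
move=> w_lt_r; have r_gt0 : 0 < r by apply: le_lt_trans w_lt_r.
rewrite sqrtr_gt0 subr_gt0 ltr_pdivrMr ?exprn_gt0 // mul1r.
by rewrite -(real_normK (num_real w)) ltrXn2r // nnegrE // ltW.
Qed.

Lemma cos_le_sqf x r w : 0 < r -> `|w| <= r -> sin x = w / r -> cos x <= sqf r w.
Proof.
move=> r_gt0 w_le_r sinx.
have cos2 : cos x ^+ 2 = sqf r w ^+ 2 by rewrite sqf_sqr // cos2sin2 sinx expr_div_n.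
have := sqf_ge0 r w; nra.
Qed.

Lemma sincos_asin r w : 0 < r -> `|w| <= r ->
  sin (asin (w / r)) = w / r /\ cos (asin (w / r)) = sqf r w.
Proof.
move=> r_gt0 w_le_r.
have wr : -1 <= w / r <= 1.
  by rewrite -ler_norml normrM normfV [`|r|]gtr0_norm // ler_pdivrMr // mul1r.
by rewrite asinK ?in_itv //= cos_asin // expr_div_n.
Qed.

Lemma sqf_continuous w x : x != 0 -> {for x, continuous (fun r => sqf r w)}.
Proof.
move=> x_neq0; apply: (@continuous_comp _ _ _ (fun r => 1 - w ^+ 2 / r ^+ 2)).
  apply: cvgB; first exact: cvg_cst.
  apply: cvgMl_tmp; apply: cvgV; first by rewrite expf_neq0.
  exact: exprn_continuous.
exact: sqrt_continuous.
Qed.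

Lemma sqf_circle u w : `|w| < u -> (`|w| / u) ^+ 2 + sqf u w ^+ 2 = 1.
Proof.
move=> w_lt_u; have u_gt0 : 0 < u := le_lt_trans (normr_ge0 w) w_lt_u.
by rewrite sqf_sqr ?ltW // expr_div_n real_normK ?num_real // addrC subrK.
Qed.

Lemma sqf_normr r w : sqf r `|w| = sqf r w.
Proof. by rewrite /sqf real_normK ?num_real. Qed.

Lemma sqfr0 r : sqf r 0 = 1.
Proof. by rewrite /sqf expr0n /= mul0r subr0 sqrtr1. Qed.

(* Concavity of [t |-> t * sqrt (1 - w^2 t^2)] in [t = 1/r]: its tangent at
   [1/u] has slope [2 c - 1/c] with [c = sqf u w]. *)
Lemma sqf_divr_le_tangent r u w : 0 < r -> `|w| <= r -> `|w| < u ->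
  sqf r w / r <= sqf u w / u + (r^-1 - u^-1) * (2 * sqf u w - (sqf u w)^-1).
Proof.
move=> r_gt0 w_le_r w_lt_u; have u_gt0 : 0 < u := le_lt_trans (normr_ge0 w) w_lt_u.
have d_gt0 : 0 < sqf u w by apply: sqf_gt0.
have c2 : sqf r w ^+ 2 = 1 - w ^+ 2 * r^-1 ^+ 2 by rewrite sqf_sqr // exprVn.
have d2 : sqf u w ^+ 2 = 1 - w ^+ 2 * u^-1 ^+ 2 by rewrite sqf_sqr ?ltW // exprVn.
have [t_ge0 t0_ge0] : 0 <= r^-1 /\ 0 <= u^-1 by rewrite !invr_ge0 !ltW.
have key := mul_sqrt_tangent_le (sqr_ge0 w) t_ge0 t0_ge0 (sqf_ge0 r w) (ltW d_gt0) c2 d2.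
rewrite -(ler_pM2r d_gt0).
set c := sqf r w in c2 key *; set d := sqf u w in d2 d_gt0 key *.
have -> : (d / u + (r^-1 - u^-1) * (2 * d - d^-1)) * d =
          d ^+ 2 * (2 * r^-1 - u^-1) - (r^-1 - u^-1).
  by field; rewrite !gt_eqF.
have -> : c / r * d = r^-1 * c * d by ring.
by apply: (le_trans key); rewrite d2; lra.
Qed.

End Sqf.

Section CircleMax.
Variable R : rcfType.
Implicit Types m x y : R.

(* [crit_y m] is the positive root of [m y + 2 y^2 = 1], the critical-point
   equation of [x (m + y)] on the unit circle. *)
Definition crit_y m : R := (Num.sqrt (m ^+ 2 + 8) - m) / 4.
Definition crit_x m : R := Num.sqrt (1 - crit_y m ^+ 2).
Definition circle_max m : R := crit_x m * (m + crit_y m).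

Lemma crit_y_root m : m * crit_y m + 2 * crit_y m ^+ 2 = 1.
Proof.
have s2 : Num.sqrt (m ^+ 2 + 8) ^+ 2 = m ^+ 2 + 8 by rewrite sqr_sqrtr // addr_ge0 ?sqr_ge0.
by rewrite /crit_y; set s := Num.sqrt _ in s2 *; apply/eqP; rewrite -subr_eq0; nra.
Qed.

Lemma crit_y_gt0 m : 0 < crit_y m.
Proof.
have s2 : Num.sqrt (m ^+ 2 + 8) ^+ 2 = m ^+ 2 + 8 by rewrite sqr_sqrtr // addr_ge0 ?sqr_ge0.
have := sqrtr_ge0 (m ^+ 2 + 8).
by rewrite /crit_y; set s := Num.sqrt _ in s2 *; move=> s_ge0; nra.
Qed.

Lemma crit_y_lt1 m : 0 <= m -> crit_y m < 1.
Proof.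
move=> m_ge0; have := crit_y_root m; have y_gt0 := crit_y_gt0 m.
have := mulr_ge0 m_ge0 (ltW y_gt0); rewrite expr2; nra.
Qed.

Lemma crit_x_gt0 m : 0 <= m -> 0 < crit_x m.
Proof.
by move=> m_ge0; have := crit_y_lt1 m_ge0; have := crit_y_gt0 m; rewrite sqrtr_gt0; nra.
Qed.

Lemma crit_x_sqr m : 0 <= m -> crit_x m ^+ 2 + crit_y m ^+ 2 = 1.
Proof.
move=> m_ge0; have := crit_y_lt1 m_ge0; have := crit_y_gt0 m.
move=> y_gt0 y_lt1; rewrite sqr_sqrtr; [lra | nra].
Qed.

Lemma crit_y_unique m y : 0 <= m -> 0 < y -> m * y + 2 * y ^+ 2 = 1 -> y = crit_y m.
Proof.
move=> m_ge0 y_gt0 root_y; have := crit_y_root m; have := crit_y_gt0 m.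
set z := crit_y m => z_gt0 root_z.
have : (y - z) * (m + 2 * y + 2 * z) = 0.
  by transitivity ((m * y + 2 * y ^+ 2) - (m * z + 2 * z ^+ 2)); [ring | rewrite root_y root_z subrr].
by move/eqP; rewrite mulf_eq0 subr_eq0 => /orP[/eqP //|/eqP]; lra.
Qed.

Lemma circle_max_ge m x y : 0 <= m -> 0 <= x -> 0 <= y -> x ^+ 2 + y ^+ 2 = 1 ->
  x * (m + y) <= circle_max m.
Proof.
move=> m_ge0 x_ge0 y_ge0 circ; rewrite /circle_max.
have xs_gt0 := crit_x_gt0 m_ge0; have ys_gt0 := crit_y_gt0 m.
have circ_s := crit_x_sqr m_ge0; have root_ys := crit_y_root m.
set xs := crit_x m in xs_gt0 circ_s *; set ys := crit_y m in ys_gt0 circ_s root_ys *.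
have ey : y ^+ 2 = 1 - 1 * x ^+ 2 by lra.
have eys : ys ^+ 2 = 1 - 1 * xs ^+ 2 by lra.
have := mul_sqrt_tangent_le ler01 x_ge0 (ltW xs_gt0) y_ge0 (ltW ys_gt0) ey eys.
have -> : x * (1 - 2 * 1 * xs ^+ 2) + 1 * xs ^+ 3 = ys * (xs * (m + ys) - m * x).
  transitivity (ys * (xs * (m + ys) - m * x) + (xs - 2 * x) * (xs ^+ 2 + ys ^+ 2 - 1)
                + (x - xs) * (m * ys + 2 * ys ^+ 2 - 1)); first ring.
  by rewrite circ_s root_ys !subrr !mulr0 !addr0.
by move=> key; rewrite -(ler_pM2l ys_gt0); lra.
Qed.

Lemma circle_max_gt0 m : 0 <= m -> 0 < circle_max m.
Proof.
by move=> m_ge0; rewrite mulr_gt0 ?crit_x_gt0 // ltr_wpDl // crit_y_gt0.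
Qed.

Lemma circle_max_le m : 0 <= m -> circle_max m <= m + 1 / 2.
Proof.
move=> m_ge0; have circ := crit_x_sqr m_ge0; have xs_gt0 := crit_x_gt0 m_ge0.
have xs_le1 : crit_x m <= 1 by nra.
have : 0 <= (crit_x m - crit_y m) ^+ 2 by apply: sqr_ge0.
by rewrite /circle_max; nra.
Qed.

End CircleMax.

Lemma double_natr_sub1_ge0 (R : numDomainType) (N : nat) : (0 < N)%N ->
  0 <= 2 * N%:R - 1 :> R.
Proof. by move=> N_gt0; rewrite subr_ge0 -natrM ler1n muln_gt0. Qed.

Lemma lower_boundE (R : realType) (N : nat) (M : R) : (0 < N)%N ->
  lower_bound N M = N%:R * M / circle_max (2 * N%:R - 1).
Proof.
move=> N_gt0; have m_ge0 := double_natr_sub1_ge0 R N_gt0.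
rewrite /lower_bound /=; set m := 2 * N%:R - 1 in m_ge0 *.
have -> : 4 * N%:R ^+ 2 - 4 * N%:R + 9 = m ^+ 2 + 8 :> R by rewrite /m; ring.
have y_gt0 := crit_y_gt0 m.
have s_def : Num.sqrt (m ^+ 2 + 8) = m + 4 * crit_y m by rewrite /crit_y; field.
rewrite s_def.
have -> : (6 * N%:R - 3 + (m + 4 * crit_y m)) * Num.sqrt (5 - 2 * N%:R + (m + 4 * crit_y m))
          * Num.sqrt (3 + 2 * N%:R - (m + 4 * crit_y m)) = 16 * circle_max m.
  rewrite -mulrA -sqrtrM; last by rewrite /m; lra.
  have -> : (5 - 2 * N%:R + (m + 4 * crit_y m)) * (3 + 2 * N%:R - (m + 4 * crit_y m))
            = 4 ^+ 2 * (1 - crit_y m ^+ 2) by rewrite /m; ring.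
  rewrite sqrtrM ?sqr_ge0 // sqrtr_sqr ger0_norm // /circle_max -/(crit_x m) /m; ring.
by field; rewrite gt_eqF ?circle_max_gt0.
Qed.

Lemma lower_bound_ge (R : realType) (N : nat) (M : R) : (0 < N)%N -> 0 <= M ->
  2 * N%:R * M / (4 * N%:R - 1) <= lower_bound N M.
Proof.
move=> N_gt0 M_ge0; rewrite lower_boundE //.
have m_ge0 := double_natr_sub1_ge0 R N_gt0.
have V_gt0 := circle_max_gt0 m_ge0; have V_le := circle_max_le m_ge0.
rewrite ler_pdivrMr; last by lra.
have -> : 2 * N%:R * M = N%:R * M * 2 :> R by ring.
rewrite -[leRHS]mulrA; apply: ler_wpM2l; first by rewrite mulr_ge0.
by rewrite [_^-1 * _]mulrC ler_pdivlMr //; lra.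
Qed.

Lemma lower_bound_gt0 (R : realType) (N : nat) (M : R) : (0 < N)%N -> 0 < M ->
  0 < lower_bound N M.
Proof.
move=> N_gt0 M_gt0; have V_gt0 := circle_max_gt0 (double_natr_sub1_ge0 R N_gt0).
by rewrite lower_boundE // divr_gt0 // mulr_gt0 // ltr0n.
Qed.

Section Equilibria.
Variables (R : realType) (N : nat) (Om : 'I_N -> R).
Implicit Types k r : R.

Lemma normInf_ge j : `|Om j| <= normInf Om.
Proof. exact: le_bigmax. Qed.

Lemma normInf_attained : (0 < N)%N -> exists i, normInf Om = `|Om i|.
Proof.
move=> N_gt0; have [i _ max_i] := eq_bigmax (Ordinal N_gt0) predT (fun j => `|Om j|) erefl
  (fun j _ => normr_ge0 (Om j)).
by exists i.
Qed.

Definition sqf_sum r : R := N%:R + \sum_(j < N) sqf r (Om j).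

Lemma sumr_one : \sum_(j < N) (1 : R) = N%:R.
Proof. by rewrite sumr_const card_ord. Qed.

Lemma sqf_sum_ge r : N%:R <= sqf_sum r.
Proof. by rewrite lerDl sumr_ge0 // => j _; apply: sqf_ge0. Qed.

Lemma sqf_sum_le r : sqf_sum r <= 2 * N%:R.
Proof.
have : \sum_(j < N) sqf r (Om j) <= \sum_(j < N) 1.
  by apply: ler_sum => j _; apply: sqf_le1.
rewrite sumr_one /sqf_sum; lra.
Qed.

Lemma sqf_sum_le_single i r : sqf_sum r <= 2 * N%:R - 1 + sqf r (Om i).
Proof.
have := sumr_one; rewrite (bigD1 i) //= => N_eq.
have sum_le : \sum_(j < N | j != i) sqf r (Om j) <= \sum_(j < N | j != i) 1.
  by apply: ler_sum => j _; apply: sqf_le1.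
rewrite /sqf_sum (bigD1 i) //=; lra.
Qed.

Lemma sum_sqf_single (F : R -> R) i r : (forall j, j != i -> Om j = 0) ->
  \sum_(j < N) F (sqf r (Om j)) = F (sqf r (Om i)) + (N%:R - 1) * F 1.
Proof.
move=> Om_other; rewrite (bigD1 i) //=; congr (_ + _).
have -> : N%:R - 1 = \sum_(j < N | j != i) (1 : R).
  by rewrite -sumr_one (bigD1 i) //= addrC addrK.
by rewrite mulr_suml; apply: eq_bigr => j /Om_other ->; rewrite sqfr0 mul1r.
Qed.

Lemma sqf_sum_continuous r : r != 0 -> {for r, continuous sqf_sum}.
Proof.
move=> r_neq0; apply: cvgD; first exact: cvg_cst.
by apply: cvg_big => //; [exact: add_continuous | move=> j _; apply: sqf_continuous].
Qed.

Lemma exists_sqf_sum_radius k u : 0 < k -> 0 < u -> N%:R * u <= k * sqf_sum u ->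
  exists2 r, u <= r & k * sqf_sum r = N%:R * r.
Proof.
move=> k_gt0 u_gt0 Nu_le.
pose phi r := N%:R * r - k * sqf_sum r.
pose b := Num.max u (2 * k).
have u_le_b : u <= b by rewrite le_max lexx.
have phib : 0 <= phi b.
  rewrite subr_ge0; apply: le_trans (ler_wpM2l (ltW k_gt0) (sqf_sum_le b)) _.
  have : 2 * k <= b by rewrite le_max lexx orbT.
  by have := ler0n R N; nra.
have phi_cont : {within `[u, b], continuous phi}.
  apply: continuous_in_subspaceT => x; rewrite inE /= in_itv /= => /andP[u_le_x _].
  apply: cvgB; first by apply: cvgMl_tmp; exact: cvg_id.
  by apply: cvgMl_tmp; apply: sqf_sum_continuous; rewrite gt_eqF // (lt_le_trans u_gt0).
have [|r] := IVT u_le_b phi_cont (_ : Num.min (phi u) (phi b) <= 0 <= Num.max (phi u) (phi b)).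
  by rewrite ge_min le_max phib orbT subr_le0 Nu_le.
by rewrite in_itv /= => /andP[u_le_r _] /eqP; rewrite subr_eq0 eq_sym => /eqP; exists r.
Qed.

Lemma equilibrium_of_radius k r : 0 < r -> (forall j, `|Om j| <= r) ->
  k * sqf_sum r = N%:R * r -> has_equilibrium Om k.
Proof.
move=> r_gt0 Om_le_r k_sum; exists (fun j => asin (Om j / r)) => i.
have N_gt0 : 0 < N%:R :> R by rewrite ltr0n (leq_ltn_trans (leq0n i) (ltn_ord i)).
rewrite /rhs -mulr_suml.
under eq_bigr do rewrite (sincos_asin r_gt0 (Om_le_r _)).2.
rewrite (sincos_asin r_gt0 (Om_le_r i)).1 big_split /= sumr_one -/(sqf_sum r).
have -> : k / N%:R * (sqf_sum r * (Om i / r)) = k * sqf_sum r / (N%:R * r) * Om i.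
  by field; rewrite !gt_eqF.
by rewrite k_sum divff ?mul1r ?subrr // mulf_neq0 ?gt_eqF.
Qed.

Lemma radius_of_equilibrium k : (exists i, Om i != 0) -> 0 < k -> has_equilibrium Om k ->
  exists r, [/\ 0 < r, forall j, `|Om j| <= r & N%:R * r <= k * sqf_sum r].
Proof.
move=> [i0 Om_i0] k_gt0 [th th_eq].
have N_gt0 : 0 < N%:R :> R by rewrite ltr0n (leq_ltn_trans (leq0n i0) (ltn_ord i0)).
set S := \sum_(j < N) (1 + cos (th j)).
have Om_eq i : Om i = k / N%:R * S * sin (th i).
  by move/eqP: (th_eq i); rewrite /rhs -mulr_suml subr_eq0 mulrA => /eqP.
set r := k / N%:R * S in Om_eq.
have S_ge0 : 0 <= S by apply: sumr_ge0 => j _; have := cos_geN1 (th j); lra.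
have r_gt0 : 0 < r.
  rewrite lt0r mulr_ge0 ?divr_ge0 ?(ltW k_gt0) // andbT.
  by apply: contraNneq Om_i0; rewrite Om_eq => ->; rewrite mul0r.
have Om_le_r j : `|Om j| <= r.
  rewrite Om_eq normrM gtr0_norm // -[leRHS]mulr1 ler_pM2l //.
  by rewrite ler_norml sin_geN1 sin_le1.
exists r; split => //.
have -> : N%:R * r = k * S by rewrite /r; field; rewrite gt_eqF.
apply: ler_wpM2l; first exact: ltW.
rewrite /S big_split /= sumr_one lerD2l.
apply: ler_sum => j _; apply: cos_le_sqf => //.
by rewrite Om_eq mulrAC divff ?mul1r // gt_eqF.
Qed.

Section CriticalCoupling.
Variable u : R.
Hypotheses (N_gt0 : (0 < N)%N) (Om_lt_u : forall j, `|Om j| < u) (u_eq : ustar_eq Om u).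

Let u_gt0 : 0 < u := le_lt_trans (normr_ge0 _) (Om_lt_u (Ordinal N_gt0)).
Let Nr_gt0 : 0 < N%:R :> R. Proof. by rewrite ltr0n. Qed.
Let sqf_sum_u_gt0 : 0 < sqf_sum u := lt_le_trans Nr_gt0 (sqf_sum_ge u).

Lemma kappa_cE : kappa_c Om u = N%:R * u / sqf_sum u.
Proof. by []. Qed.

(* [ustar_eq] says that the tangent slopes of [sqf_divr_le_tangent] add up to
   [-N], i.e. that [t |-> t * sqf_sum (1/t)] is stationary at [t = 1/u]. *)
Lemma sqf_sum_divr_le r : 0 < r -> (forall j, `|Om j| <= r) -> sqf_sum r / r <= sqf_sum u / u.
Proof.
move=> r_gt0 Om_le_r.
have slope : \sum_(j < N) (2 * sqf u (Om j) - (sqf u (Om j))^-1) = - N%:R.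
  have inv_sum : \sum_(j < N) 1 / sqf u (Om j) = \sum_(j < N) (sqf u (Om j))^-1.
    by apply: eq_bigr => j _; rewrite div1r.
  by move: u_eq; rewrite /ustar_eq inv_sum sumrB -mulr_sumr; lra.
have : \sum_(j < N) sqf r (Om j) / r <= \sum_(j < N)
    (sqf u (Om j) / u + (r^-1 - u^-1) * (2 * sqf u (Om j) - (sqf u (Om j))^-1)).
  by apply: ler_sum => j _; apply: sqf_divr_le_tangent.
rewrite big_split /= -mulr_sumr slope -!mulr_suml /sqf_sum !mulrDl.
lra.
Qed.

Lemma has_equilibrium_iff k : (exists i, Om i != 0) -> 0 < k ->
  has_equilibrium Om k <-> kappa_c Om u <= k.
Proof.
move=> Om_ne0 k_gt0; rewrite kappa_cE ler_pdivrMr //; split.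
- case/(radius_of_equilibrium Om_ne0 k_gt0) => r [r_gt0 Om_le_r Nr_le].
  have := sqf_sum_divr_le r_gt0 Om_le_r.
  rewrite ler_pdivrMr // mulrAC ler_pdivlMr // => G_le.
  rewrite -(ler_pM2r r_gt0).
  have := ler_wpM2l (ltW k_gt0) G_le; have := ler_wpM2r (ltW u_gt0) Nr_le.
  nra.
- move=> Nu_le; have [r u_le_r k_r] := exists_sqf_sum_radius k_gt0 u_gt0 Nu_le.
  apply: (@equilibrium_of_radius k r) => // [|j]; first exact: lt_le_trans u_le_r.
  exact: le_trans (ltW (Om_lt_u j)) u_le_r.
Qed.

Lemma kappa_c_ge_norm i : N%:R * `|Om i| / circle_max (2 * N%:R - 1) <= kappa_c Om u.
Proof.
have m_ge0 := double_natr_sub1_ge0 R N_gt0.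
set m := 2 * N%:R - 1 in m_ge0 *; have V_gt0 := circle_max_gt0 m_ge0.
have circ := sqf_circle (Om_lt_u i).
set x := `|Om i| / u in circ *; set y := sqf u (Om i) in circ *.
have Om_i : `|Om i| = u * x by rewrite /x mulrC divfK ?gt_eqF.
have x_ge0 : 0 <= x by rewrite /x divr_ge0 // ltW.
have xy_le : x * (m + y) <= circle_max m := circle_max_ge m_ge0 x_ge0 (sqf_ge0 _ _) circ.
have G_le : sqf_sum u <= m + y := sqf_sum_le_single i u.
rewrite kappa_cE ler_pdivrMr // mulrAC ler_pdivlMr // -!mulrA ler_pM2l // Om_i.
have := ler_wpM2l (mulr_ge0 (ltW u_gt0) x_ge0) G_le; have := ler_wpM2l (ltW u_gt0) xy_le.
lra.
Qed.

Lemma kappa_c_single i : (forall j, j != i -> Om j = 0) ->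
  kappa_c Om u = N%:R * `|Om i| / circle_max (2 * N%:R - 1).
Proof.
move=> Om_other; have m_ge0 := double_natr_sub1_ge0 R N_gt0.
set m := 2 * N%:R - 1 in m_ge0 *.
have circ := sqf_circle (Om_lt_u i).
set x := `|Om i| / u in circ *; set y := sqf u (Om i) in circ *.
have y_gt0 : 0 < y by apply: sqf_gt0.
have G_eq : sqf_sum u = m + y.
  by rewrite /sqf_sum (sum_sqf_single id u Om_other) /= -/y /m; ring.
have root_y : m * y + 2 * y ^+ 2 = 1.
  move: u_eq; rewrite /ustar_eq (sum_sqf_single id u Om_other) (sum_sqf_single (fun s => 1 / s) u Om_other) /=.
  rewrite divr1 mulr1 div1r -/y => sums_eq.
  have e : m + 2 * y = y^-1 by rewrite /m; lra.
  by transitivity ((m + 2 * y) * y); [ring | rewrite e mulVf ?gt_eqF].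
have y_eq := crit_y_unique m_ge0 y_gt0 root_y.
have x_eq : x = crit_x m.
  rewrite /crit_x; have -> : 1 - crit_y m ^+ 2 = x ^+ 2 by rewrite -y_eq -circ addrK.
  by rewrite sqrtr_sqr ger0_norm // divr_ge0 // ltW.
have Om_i : `|Om i| = u * x by rewrite /x mulrC divfK ?gt_eqF.
have x_gt0 : 0 < x by rewrite x_eq crit_x_gt0.
rewrite kappa_cE G_eq Om_i /circle_max -x_eq -y_eq.
by field; rewrite !gt_eqF // ?ltr_wpDl.
Qed.

Lemma kappa_c_le M : 0 < M -> (forall j, `|Om j| <= M) ->
  kappa_c Om u <= 4 / (3 * Num.sqrt 3) * M.
Proof.
move=> M_gt0 Om_le_M.
have s3_gt0 : 0 < Num.sqrt 3 :> R by rewrite sqrtr_gt0 ltr0n.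
have s3_sqr : Num.sqrt 3 ^+ 2 = 3 :> R by rewrite sqr_sqrtr ?ler0n.
set r := 2 * M / Num.sqrt 3.
have r_gt0 : 0 < r by rewrite divr_gt0 ?mulr_gt0.
have M_le_r : M <= r by rewrite /r ler_pdivlMr //; nra.
have Om_le_r j : `|Om j| <= r := le_trans (Om_le_M j) M_le_r.
have half_le j : 1 / 2 <= sqf r (Om j).
  have : Om j ^+ 2 <= M ^+ 2.
    by rewrite -(real_normK (num_real (Om j))) lerXn2r ?nnegrE ?Om_le_M // ltW.
  have r2 : r ^+ 2 = 4 / 3 * M ^+ 2 by rewrite /r expr_div_n s3_sqr; ring.
  have := sqf_sqr r_gt0 (Om_le_r j); have := sqf_ge0 r (Om j).
  rewrite r2 => s_ge0 s2 OmM.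
  have : Om j ^+ 2 / (4 / 3 * M ^+ 2) <= 3 / 4.
    by rewrite ler_pdivrMr ?mulr_gt0 ?exprn_gt0 //; lra.
  nra.
have G_ge : 3 / 2 * N%:R <= sqf_sum r.
  have : \sum_(j < N) (1 / 2 : R) <= \sum_(j < N) sqf r (Om j) by apply: ler_sum.
  by rewrite sumr_const card_ord -mulr_natr /sqf_sum; lra.
have := sqf_sum_divr_le r_gt0 Om_le_r.
rewrite ler_pdivrMr // mulrAC ler_pdivlMr // => G_le.
rewrite kappa_cE ler_pdivrMr //.
have -> : 4 / (3 * Num.sqrt 3) * M * sqf_sum u = 2 / 3 * (sqf_sum u * r).
  by rewrite /r; field; rewrite gt_eqF.
have := ler_wpM2r (ltW u_gt0) G_ge; lra.
Qed.

Lemma kappa_c_const M : (forall j, `|Om j| = M) -> kappa_c Om u = 4 / (3 * Num.sqrt 3) * M.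
Proof.
move=> Om_eq_M; set i0 := Ordinal N_gt0.
have s3_gt0 : 0 < Num.sqrt 3 :> R by rewrite sqrtr_gt0 ltr0n.
have s3_sqr : Num.sqrt 3 ^+ 2 = 3 :> R by rewrite sqr_sqrtr ?ler0n.
set y := sqf u M.
have sqf_M j : sqf u (Om j) = y by rewrite -sqf_normr Om_eq_M.
have y_gt0 : 0 < y by rewrite -(sqf_M i0); apply: sqf_gt0.
have sum_sqf : \sum_(j < N) sqf u (Om j) = N%:R * y.
  by under eq_bigr do rewrite sqf_M; rewrite sumr_const card_ord mulr_natl.
have root_y : 1 * y + 2 * y ^+ 2 = 1.
  move: u_eq; rewrite /ustar_eq sum_sqf.
  under eq_bigr do rewrite sqf_M; rewrite sumr_const card_ord => sums_eq.
  have e : 1 + 2 * y = 1 / y.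
    by apply: (mulfI (lt0r_neq0 Nr_gt0)); rewrite mulrDr mulr1 mulrCA sums_eq mulr_natl.
  by transitivity ((1 + 2 * y) * y); [ring | rewrite e div1r mulVf ?gt_eqF].
have y_half : y = 1 / 2.
  rewrite (crit_y_unique ler01 y_gt0 root_y); symmetry.
  by apply: crit_y_unique; rewrite ?ler01 ?divr_gt0 //; field.
have := sqf_circle (Om_lt_u i0); rewrite Om_eq_M sqf_M y_half.
set x := M / u => circ.
have x_ge0 : 0 <= x by rewrite /x -(Om_eq_M i0) divr_ge0 // ltW.
have x2 : x ^+ 2 = 3 / 4 by lra.
have x_eq : x = Num.sqrt 3 / 2.
  apply/eqP; rewrite -(eqrXn2 (_ : 0 < 2)%N) ?x2 ?expr_div_n ?s3_sqr //.
  by apply/eqP; field.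
have M_eq : M = u * x by rewrite /x mulrC divfK ?gt_eqF.
rewrite kappa_cE /sqf_sum sum_sqf y_half M_eq x_eq.
by field; rewrite gt_eqF //= gt_eqF // addr_gt0 // mulr_gt0.
Qed.

End CriticalCoupling.
End Equilibria.

Unset Implicit Arguments.

Theorem proposition6p3 (R : realType) (N : nat) (Om : 'I_N -> R) (u : R) :
  (exists i, Om i != 0) ->
  normInf Om < u -> u <= 2 / Num.sqrt 3 * normInf Om ->
  ustar_eq Om u ->
  (forall k : R, 0 < k -> (has_equilibrium Om k <-> kappa_c Om u <= k)) /\
  kappa_c Om u = inf [set ks : R | 0 < ks /\ forall k, ks < k -> has_equilibrium Om k] /\
  2 * N%:R * normInf Om / (4 * N%:R - 1) <= lower_bound N (normInf Om) /\
  lower_bound N (normInf Om) <= kappa_c Om u /\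
  kappa_c Om u <= 4 / (3 * Num.sqrt 3) * normInf Om /\
  ((forall i j, i != j -> Om i = 0 \/ Om j = 0) ->
     lower_bound N (normInf Om) = kappa_c Om u) /\
  ((forall i, `|Om i| = normInf Om) ->
     kappa_c Om u = 4 / (3 * Num.sqrt 3) * normInf Om).
Proof.
move=> Om_ne0 M_lt_u _ u_eq; have [i1 Om_i1] := Om_ne0.
have N_gt0 : (0 < N)%N := leq_ltn_trans (leq0n i1) (ltn_ord i1).
have [i0 M_eq] := normInf_attained Om N_gt0.
set M := normInf Om in M_lt_u M_eq *.
have Om_le_M j : `|Om j| <= M := normInf_ge Om j.
have M_gt0 : 0 < M by apply: lt_le_trans (Om_le_M i1); rewrite normr_gt0.
have Om_lt_u j : `|Om j| < u := le_lt_trans (Om_le_M j) M_lt_u.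
have lb_le : lower_bound N M <= kappa_c Om u.
  by rewrite lower_boundE // M_eq; apply: kappa_c_ge_norm.
have kc_gt0 : 0 < kappa_c Om u := lt_le_trans (lower_bound_gt0 N_gt0 M_gt0) lb_le.
have equil (k : R) (k_gt0 : 0 < k) := has_equilibrium_iff N_gt0 Om_lt_u u_eq Om_ne0 k_gt0.
split; first exact: equil.
split; first exact: inf_threshold kc_gt0 equil.
split; first exact: lower_bound_ge N_gt0 (ltW M_gt0).
split; first exact: lb_le.
split; first exact (kappa_c_le N_gt0 Om_lt_u u_eq M_gt0 Om_le_M).
split=> [single | all_M]; last exact (kappa_c_const N_gt0 Om_lt_u u_eq all_M).
have Om_i0 : Om i0 != 0 by rewrite -normr_gt0 -M_eq.
rewrite lower_boundE // M_eq (kappa_c_single N_gt0 Om_lt_u u_eq (i := i0)) // => j j_ne_i0.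
have i0_ne_j : i0 != j by rewrite eq_sym.
have [Om_i0_eq0 | //] := single i0 j i0_ne_j.
by rewrite Om_i0_eq0 eqxx in Om_i0.
Qed.
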